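(* For all $R\in\mathcal{M}$, $$\sum_{\substack{H,S,T\in\mathcal{M},\ HST\in\mathcal{S}_{\mathcal{M}}(X)\\ (S,T)=1,\ (HST,R)=1\\ \deg HS,\ \deg HT\le\frac{1}{10}\deg R}}\frac{\alpha_{-1}(HS)\alpha_{-1}(HT)}{|HST|}\deg ST \ll X^4$$ as $X\to\infty$.
   Context: $q$ prime power, $\mathcal{M}$ the monic polynomials of $\mathbb{F}_q[T]$, $P$ denotes a monic irreducible, $|A|=q^{\deg A}$, $X$ a positive integer, $\mathcal{S}_{\mathcal{M}}(X)=\{A\in\mathcal{M}: P\mid A\Rightarrow\deg P\le X\}$. The function $\alpha_{-1}$ is multiplicative with: $\alpha_{-1}(P)=-1$ if $\deg P\le X$ and $0$ if $\deg P>X$; $\alpha_{-1}(P^2)=\frac12$ if $\frac X2<\deg P\le X$ and $0$ otherwise; $\alpha_{-1}(P^3)=-\frac12$ if $\frac X2<\deg P\le X$ and $0$ otherwise; $\alpha_{-1}(P^m)=0$ for $m\ge4$. *)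

From HB Require Import structures.
From mathcomp Require Import all_boot all_order all_algebra all_field.
From mathcomp Require Import boolp.
Set Implicit Arguments. Unset Strict Implicit. Unset Printing Implicit Defensive.
Import Order.TTheory GRing.Theory Num.Theory.
Local Open Scope ring_scope.

Section Defs.
Variable F : finFieldType.
Variable R : realFieldType.

Definition pdeg (A : {poly F}) : nat := (size A).-1.

Definition pnorm (A : {poly F}) : R := (#|F|%:R) ^+ pdeg A.

Definition monic_le (d : nat) : seq {poly F} :=
  undup [seq p <- [seq Poly (tval t) | t : (d.+1).-tuple F]
           | (p \is monic) && (size p <= d.+1)%N].

Definition mirred (P : {poly F}) : bool :=
  (P \is monic) && `[< irreducible_poly P >].

Definition pmult (P A : {poly F}) : nat :=
  \max_(m < size A | P ^+ m %| A) (m : nat).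

Definition smooth (X : nat) (A : {poly F}) : bool :=
  all (fun P => (P %| A) ==> (pdeg P <= X)%N)
      [seq P <- monic_le (pdeg A) | mirred P].

Definition alpha_loc (X : nat) (P : {poly F}) (m : nat) : R :=
  match m with
  | 0 => 1
  | 1 => if (pdeg P <= X)%N then -1 else 0
  | 2 => if (X < 2 * pdeg P)%N && (pdeg P <= X)%N then 2^-1 else 0
  | 3 => if (X < 2 * pdeg P)%N && (pdeg P <= X)%N then - 2^-1 else 0
  | _ => 0
  end.

Definition alpha (X : nat) (A : {poly F}) : R :=
  \prod_(P <- monic_le (pdeg A) | mirred P && (P %| A)) alpha_loc X P (pmult P A).

Definition lemma_sum (X : nat) (Rp : {poly F}) : R :=
  let D := pdeg Rp in
  \sum_(H <- monic_le D) \sum_(S <- monic_le D) \sum_(T <- monic_le D |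
      [&& smooth X (H * S * T), coprimep S T, coprimep (H * S * T) Rp,
          (10 * pdeg (H * S) <= D)%N & (10 * pdeg (H * T) <= D)%N])
    alpha X (H * S) * alpha X (H * T) / pnorm (H * S * T) * (pdeg (S * T))%:R.

End Defs.

From HB Require Import structures.
From mathcomp Require Import all_boot all_order all_algebra all_field.
From mathcomp Require Import boolp.
From mathcomp.algebra_tactics Require Import ring lra.
Set Implicit Arguments. Unset Strict Implicit. Unset Printing Implicit Defensive.
Import Order.TTheory GRing.Theory Num.Theory.
Local Open Scope ring_scope.

(* Since |alpha_{-1}| <= 1, |HST| = |H||S||T| and deg ST = deg S + deg T, the sum is at most
   2 S0^2 S1, where S0 and S1 are the sums of 1/|A| and of deg A/|A| over the X-smooth monic A.
   Writing such an A as a product of powers of the monic irreducibles P of degree at most X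
   bounds S0 by the Euler product E = prod_P (1 - 1/|P|)^-1 and S1 by 2 E sum_P deg P/|P|.
   The monic irreducibles of degree d all divide T^(q^d) - T, so there are at most q^d/d of
   them. Hence sum_P deg P/|P| <= X, and E <= 2^q X: by Bernoulli's inequality the factor of
   E coming from degree d >= 2 is at most (1 - 1/d)^-1 = d/(d-1), and these telescope. *)

Section RealInequalities.
Variable R : realFieldType.
Implicit Types x y : R.

Lemma geometric_sum_le x N : 0 <= x < 1 -> \sum_(k < N) x ^+ k <= (1 - x)^-1.
Proof.
case/andP => x0 x1; have x1' : 0 < 1 - x by rewrite subr_gt0.
have telescope : (1 - x) * \sum_(k < N) x ^+ k = 1 - x ^+ N.
  rewrite -{2}(expr1n R N) subrXX; congr (_ * _).
  by apply: eq_bigr => k _; rewrite expr1n mul1r.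
rewrite -(ler_pM2l x1') telescope mulfV ?gt_eqF //.
by rewrite lerBlDr lerDl exprn_ge0.
Qed.

Lemma weighted_geometric_sum_le x N : 0 <= x < 1 ->
  \sum_(k < N) k%:R * x ^+ k <= x / (1 - x) ^+ 2.
Proof.
case/andP => x0 x1; rewrite ler_pdivlMr ?exprn_gt0 ?subr_gt0 // mulrC.
have closed_form : (1 - x) ^+ 2 * \sum_(k < N) k%:R * x ^+ k =
                   x - N%:R * x ^+ N + (N%:R - 1) * x ^+ N.+1.
  elim: N => [|N IH]; first by rewrite big_ord0 !expr0 expr1; ring.
  by rewrite big_ord_recr /= mulrDr IH !exprS -natr1; ring.
rewrite closed_form exprS.
have xN : 0 <= x ^+ N by rewrite exprn_ge0.
case: N xN {closed_form} => [|N] xN; first by rewrite expr0; lra.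
have N0 : 0 <= N%:R :> R by rewrite ler0n.
have := mulr_ge0 (mulr_ge0 xN N0) (_ : 0 <= 1 - x); rewrite subr_ge0 -natr1.
move/(_ (ltW x1)); nra.
Qed.

Lemma bernoulli_ineq x n : -1 <= x -> 1 + n%:R * x <= (1 + x) ^+ n.
Proof.
move=> x1; elim: n => [|n IH]; first by rewrite mul0r addr0.
have n0 : 0 <= n%:R :> R by rewrite ler0n.
rewrite exprS -natr1; nra.
Qed.

Lemma prod_telescope_le (t : nat -> R) n : (forall d, 0 <= t d) ->
  (forall d, (2 <= d)%N -> t d <= d%:R / (d%:R - 1)) ->
  \prod_(2 <= d < n.+2) t d <= n.+1%:R.
Proof.
move=> t0 tle; elim: n => [|n IH]; first by rewrite big_geq.
rewrite big_nat_recr //=.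
have prod0 : 0 <= \prod_(2 <= d < n.+2) t d by apply: prodr_ge0.
apply: le_trans (ler_pM prod0 (t0 _) IH (tle n.+2 isT)) _.
have -> : n.+2%:R - 1 = n.+1%:R :> R by rewrite mulrSr addrK.
by rewrite mulrCA mulfV ?mulr1 // pnatr_eq0.
Qed.

Lemma invXn_le_ratio y c d : 0 <= y <= 1 -> (2 <= d)%N ->
  c%:R * y * d%:R <= 1 -> (1 - y) ^- c <= d%:R / (d%:R - 1).
Proof.
case/andP => y0 y1 d2 cyd; have d2R : 2 <= d%:R :> R by rewrite ler_nat.
have cy : c%:R * y <= d%:R^-1 by rewrite -[d%:R^-1]mul1r ler_pdivlMr; lra.
have dinv : d%:R^-1 <= 2^-1 :> R by rewrite lef_pV2 ?posrE //; lra.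
have half_lt1 : 2^-1 < 1 :> R by rewrite invf_lt1 ?ltr1n.
have b : 1 - c%:R * y <= (1 - y) ^+ c by rewrite -mulrN; apply: bernoulli_ineq; lra.
have -> : d%:R / (d%:R - 1) = (1 - d%:R^-1)^-1 :> R.
  by field; apply/andP; split; apply/eqP; lra.
rewrite lef_pV2 ?posrE; lra.
Qed.

Lemma ler_sum_inj (T : eqType) (E : finType) (s : seq T) (P : pred T)
    (phi : T -> E) (f : T -> R) (G : E -> R) :
  uniq s -> {in [seq t <- s | P t] &, injective phi} ->
  (forall e, 0 <= G e) -> (forall t, t \in s -> P t -> f t <= G (phi t)) ->
  \sum_(t <- s | P t) f t <= \sum_e G e.
Proof.
move=> us phi_inj G0 fG; rewrite -big_filter.
apply: (@le_trans _ _ (\sum_(t <- [seq t <- s | P t]) G (phi t))).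
  by rewrite !big_seq; apply: ler_sum => t; rewrite mem_filter => /andP[Pt ts]; exact: fG.
rewrite -(big_map phi xpredT G) big_uniq ?map_inj_in_uniq ?filter_uniq //=.
by rewrite [leRHS](bigID [in [seq phi t | t <- s & P t]]) lerDl sumr_ge0.
Qed.

End RealInequalities.

Section EulerProduct.
Variables (R : realFieldType) (I : finType) (x : I -> R).
Hypothesis x_range : forall i, 0 <= x i < 1.

Let x_ge0 i : 0 <= x i. Proof. by case/andP: (x_range i). Qed.

Lemma euler_sum_le N :
  \sum_(e : {ffun I -> 'I_N}) \prod_i x i ^+ e i <= \prod_i (1 - x i)^-1.
Proof.
rewrite -(bigA_distr_bigA (fun i (k : 'I_N) => x i ^+ k)) /=.
apply: ler_prod => i _; rewrite sumr_ge0 => [|k _]; last exact: exprn_ge0.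
exact: geometric_sum_le.
Qed.

Lemma euler_weighted_sum_le N (c : I -> R) : (forall i, 0 <= c i) ->
  \sum_(e : {ffun I -> 'I_N}) (\sum_i c i * (e i)%:R) * \prod_i x i ^+ e i <=
  \prod_i (1 - x i)^-1 * \sum_i c i * (x i / (1 - x i)).
Proof.
(* The factor e_i is absorbed into the i-th factor of the product, which keeps the sum over e
   a product of one-variable sums. *)
move=> c0; pose w i j (k : nat) := (if j == i then k%:R else 1) * x j ^+ k.
have w_ge0 i j k : 0 <= w i j k by rewrite mulr_ge0 ?exprn_ge0 //; case: eqP.
have absorb_exponent i (e : {ffun I -> 'I_N}) :
    (e i)%:R * \prod_j x j ^+ e j = \prod_j w i j (e j).
  rewrite /w big_split /=; congr (_ * _).
  by rewrite (bigD1 i) //= eqxx big1 ?mulr1 // => j /negbTE->.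
have -> : \sum_(e : {ffun I -> 'I_N}) (\sum_i c i * (e i)%:R) * \prod_i x i ^+ e i =
          \sum_i c i * \sum_(e : {ffun I -> 'I_N}) \prod_j w i j (e j).
  under eq_bigr => e _ do rewrite mulr_suml.
  rewrite exchange_big; apply: eq_bigr => i _; rewrite big_distrr /=.
  by apply: eq_bigr => e _; rewrite -absorb_exponent mulrA.
rewrite mulr_sumr; apply: ler_sum => i _; rewrite mulrCA; apply: ler_wpM2l => //.
rewrite -(bigA_distr_bigA (fun j (k : 'I_N) => w i j k)) /=.
rewrite (bigD1 i) //= [in leRHS](bigD1 i) //= mulrAC.
have x1 : 0 < 1 - x i by rewrite subr_gt0; case/andP: (x_range i).
apply: ler_pM.
- exact: sumr_ge0.
- by apply: prodr_ge0 => j _; apply: sumr_ge0.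
- under eq_bigr => k _ do rewrite /w eqxx.
  rewrite [leRHS](_ : _ = x i / (1 - x i) ^+ 2); last by rewrite expr2 invfM mulrCA.
  exact: weighted_geometric_sum_le.
- apply: ler_prod => j ji; rewrite sumr_ge0 //=.
  under eq_bigr => k _ do rewrite /w (negbTE ji) mul1r.
  exact: geometric_sum_le.
Qed.

End EulerProduct.

Lemma prodr_count (R : comPzSemiRingType) (T : Type) (s : seq T) (k : T -> nat) n
    (g : nat -> R) :
  all (fun t => k t < n)%N s ->
  \prod_(t <- s) g (k t) = \prod_(d < n) g d ^+ count (fun t => k t == d) s.
Proof.
elim: s => [|t s IH]; first by rewrite big_nil big1 // => d _; rewrite expr0.
case/andP => kt ks; rewrite big_cons IH //=.
under [RHS]eq_bigr => d _ do rewrite exprD.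
rewrite big_split /=; congr (_ * _).
rewrite (bigD1 (Ordinal kt)) //= eqxx expr1 big1 ?mulr1 // => d.
by rewrite -val_eqE /= eq_sym => /negbTE->.
Qed.

Lemma sumr_count (V : nmodType) (T : Type) (s : seq T) (k : T -> nat) n
    (g : nat -> V) :
  all (fun t => k t < n)%N s ->
  \sum_(t <- s) g (k t) = \sum_(d < n) g d *+ count (fun t => k t == d) s.
Proof.
elim: s => [|t s IH]; first by rewrite big_nil big1 // => d _; rewrite mulr0n.
case/andP => kt ks; rewrite big_cons IH //=.
under [RHS]eq_bigr => d _ do rewrite mulrnDr.
rewrite big_split /=; congr (_ + _).
rewrite (bigD1 (Ordinal kt)) //= eqxx mulr1n big1 ?addr0 // => d.
by rewrite -val_eqE /= eq_sym => /negbTE->.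
Qed.

Section MonicPolynomials.
Variable F : finFieldType.
Implicit Types A B P : {poly F}.

Lemma mem_monic_le d A : (A \in monic_le F d) = (A \is monic) && (size A <= d.+1)%N.
Proof.
rewrite /monic_le mem_undup mem_filter.
apply/idP/idP => [/andP[]//|mA]; rewrite mA; case/andP: mA => _ sA.
apply/mapP; exists [tuple A`_i | i < d.+1]; first by rewrite mem_enum.
apply/polyP => i; rewrite coef_Poly /=.
have [lt_id|ge_id] := ltnP i d.+1.
  rewrite (nth_map ord0) ?size_enum_ord //.
  by rewrite -[i]/(nat_of_ord (Ordinal lt_id)) nth_ord_enum.
by rewrite !nth_default ?size_map -?enumT ?size_enum_ord // (leq_trans sA).
Qed.

Lemma mirredP P : mirred P -> [/\ P \is monic, irreducible_poly P & (1 < size P)%N].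
Proof. by case/andP => Pm /asboolP Pirr; split => //; case: Pirr. Qed.

Lemma mirred_gt0 P : mirred P -> (0 < pdeg P)%N.
Proof. by case/mirredP => _ _; rewrite /pdeg; case: (size P) => [|[]]. Qed.

Lemma pdeg_monicM A B : A \is monic -> B \is monic ->
  pdeg (A * B) = (pdeg A + pdeg B)%N.
Proof.
move=> /monic_neq0 A0 /monic_neq0 B0; rewrite /pdeg size_mul //.
move: A0 B0; rewrite -!size_poly_gt0.
by case: (size A) => // a; case: (size B) => // b _ _; rewrite addnS.
Qed.

Lemma pdeg_monic_prod (I : Type) (r : seq I) (Pr : pred I) (G : I -> {poly F}) :
  (forall i, Pr i -> G i \is monic) ->
  pdeg (\prod_(i <- r | Pr i) G i) = (\sum_(i <- r | Pr i) pdeg (G i))%N.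
Proof.
move=> Gm; elim: r => [|i r IH]; first by rewrite !big_nil /pdeg size_poly1.
by rewrite !big_cons; case: ifP => // Pri; rewrite pdeg_monicM ?IH ?Gm ?monic_prod.
Qed.

Lemma pdeg_monic_exp P k : P \is monic -> pdeg (P ^+ k) = (k * pdeg P)%N.
Proof. by move=> Pm; rewrite /pdeg size_exp mulnC. Qed.

Lemma monic_size_le1 A : A \is monic -> (size A <= 1)%N -> A = 1.
Proof.
move=> Am sA; have: size A == 1%N by rewrite eqn_leq sA size_poly_gt0 monic_neq0.
by case/size_poly1P => c _ Ac; move: Am; rewrite Ac monicE lead_coefC => /eqP->.
Qed.

Lemma smoothP X A : A != 0 ->
  reflect (forall P, mirred P -> P %| A -> (pdeg P <= X)%N) (smooth X A).
Proof.
move=> A0; apply: (iffP allP) => [smA P mP PA | smA P]; last first.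
  by rewrite mem_filter => /andP[mP _]; apply/implyP; apply: smA.
have sPA := dvdp_leq A0 PA.
apply: (implyP (smA P _)) PA; rewrite mem_filter mP mem_monic_le.
by case/mirredP: mP => -> _ _; rewrite /pdeg prednK ?size_poly_gt0.
Qed.

Lemma smooth_dvd X A B : A != 0 -> B != 0 -> B %| A -> smooth X A -> smooth X B.
Proof.
move=> A0 B0 BA /(smoothP _ A0) smA; apply/(smoothP _ B0) => P mP PB.
by apply: smA => //; apply: dvdp_trans BA.
Qed.

Lemma mirred_dvd_exists A : A \is monic -> (1 < size A)%N ->
  exists2 P, mirred P & P %| A.
Proof.
have [n] := ubnP (size A); elim: n A => // n IH A sA Am s1.
have [Airr | Ared] := pselect (irreducible_poly A).
  by exists A => //; rewrite /mirred Am; apply/asboolP.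
have [r [r1 rA nrA]] : exists r : {poly F}, [/\ size r != 1%N, r %| A & ~~ (r %= A)].
  apply: contrapT => nodiv; apply: Ared; split => // r r1 rA.
  by apply: contrapT => nrA; apply: nodiv; exists r; split => //; apply/negP.
have A0 := monic_neq0 Am.
have r0 : r != 0 by apply: contraTneq rA => ->; rewrite dvd0p.
have lt_rA : (size r < size A)%N.
  by rewrite ltn_neqAle dvdp_size_eqp // nrA dvdp_leq.
have lr0 : lead_coef r != 0 by rewrite lead_coef_eq0.
pose r' := (lead_coef r)^-1 *: r.
have r'm : r' \is monic by rewrite monicE lead_coefZ mulVf.
have sr' : size r' = size r by rewrite size_scale // invr_eq0.
have [P mP Pr'] : exists2 P, mirred P & P %| r'.
  apply: IH r'm _; first by rewrite sr' (leq_trans lt_rA).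
  by rewrite sr' ltn_neqAle eq_sym r1 size_poly_gt0.
by exists P => //; apply: dvdp_trans Pr' _; rewrite dvdpZl ?invr_eq0.
Qed.

End MonicPolynomials.

Section Irreducibles.
Variable F : finFieldType.
Implicit Types A B P : {poly F}.

Definition mirred_le X := [seq P <- monic_le F X | mirred P].

Lemma mem_mirred_le X P : (P \in mirred_le X) = mirred P && (pdeg P <= X)%N.
Proof.
rewrite mem_filter mem_monic_le; case mP: (mirred P) => //=.
by case/mirredP: mP => -> _; rewrite /pdeg; case: (size P).
Qed.

Lemma mirred_le_deg X : all (fun P => pdeg P < X.+1)%N (mirred_le X).
Proof. by apply/allP => P; rewrite mem_mirred_le ltnS => /andP[]. Qed.

Lemma uniq_mirred_le X : uniq (mirred_le X).
Proof. exact/filter_uniq/undup_uniq. Qed.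

Lemma smooth_factor X A : A \is monic -> smooth X A ->
  exists e : 'I_(size (mirred_le X)) -> nat,
    A = \prod_(i < size (mirred_le X)) (mirred_le X)`_i ^+ e i.
Proof.
have [n] := ubnP (size A); elim: n A => // n IH A sA Am smA.
have A0 := monic_neq0 Am.
have [A1 | A_gt1] := leqP (size A) 1.
  exists (fun=> 0%N); rewrite (monic_size_le1 Am A1).
  by rewrite big1 // => i _; rewrite expr0.
have [P mP PA] := mirred_dvd_exists Am A_gt1.
have [Pm _ P_gt1] := mirredP mP.
have PX : P \in mirred_le X.
  by rewrite mem_mirred_le mP; move/(smoothP X A0): smA; apply.
have AB : A = (A %/ P) * P by rewrite divpK.
set B := A %/ P in AB.
have Bm : B \is monic by move: Am; rewrite AB monicMr.
have smB : smooth X B by apply: smooth_dvd smA; rewrite ?monic_neq0 // AB dvdp_mulr.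
have sB : (size B < n)%N.
  rewrite -ltnS (leq_trans _ sA) // AB size_mul ?monic_neq0 //.
  by case: (size P) P_gt1 => [|[|p]] // _; rewrite !addnS ltnS leq_addr.
have [e Be] := IH B sB Bm smB.
pose i0 : 'I_(size (mirred_le X)) := Ordinal (etrans (index_mem _ _) PX).
exists (fun i => e i + (i == i0))%N; rewrite AB Be.
under [RHS]eq_bigr => i _ do rewrite exprD.
rewrite big_split /=; congr (_ * _).
by rewrite (bigD1 i0) //= eqxx expr1 nth_index // big1 ?mulr1 // => i /negbTE->.
Qed.

Lemma mirred_dvd_Xq_subX P : mirred P -> P %| 'X^(#|F| ^ pdeg P) - 'X.
Proof.
(* Every element of the field F[T]/(P), of order q^deg P, is a root of T^(q^deg P) - T. *)
case/mirredP=> Pm Pirr _; have Pmi : monic_irreducible_poly P by [].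
pose x : {poly %/ P with Pmi} := in_qpoly P 'X.
have xq : x ^+ (#|F| ^ pdeg P) = x by rewrite -card_qfpoly expf_card.
have : in_qpoly P ('X^(#|F| ^ pdeg P) - 'X) = 0 :> {poly %/ P with Pmi}.
  by rewrite rmorphB rmorphXn /= -/x xq subrr.
move/(congr1 val); rewrite /= /in_qpoly /= (mk_monicE Pmi) => mod0.
by rewrite /dvdp (Pdiv.IdomainMonic.modpE Pm) mod0.
Qed.

Lemma prod_mirred_dvd (L : seq {poly F}) f : uniq L -> all (@mirred F) L ->
  {in L, forall P, P %| f} -> \prod_(P <- L) P %| f.
Proof.
elim: L => [|P L IH] /=; first by rewrite big_nil dvd1p.
case/andP=> PL uL /andP[mP mL] Lf; rewrite big_cons.
have [Pm Pirr _] := mirredP mP.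
have Lf' : \prod_(Q <- L) Q %| f by apply: IH => // Q QL; rewrite Lf // inE QL orbT.
suff cop : coprimep P (\prod_(Q <- L) Q) by rewrite Gauss_dvdp // Lf' Lf ?mem_head.
rewrite big_seq; apply: (big_rec (coprimep P)) => [|Q G QL PG]; first exact: coprimep1.
rewrite coprimepMr PG andbT irreducible_poly_coprime //.
have [Qm Qirr _] := mirredP (allP mL Q QL).
apply: contra PL => PQ; have : P %= Q.
  by apply: (Qirr.2 P _ PQ); case: Pirr; rewrite neq_ltn orbC => ->.
by rewrite eqp_monic // => /eqP->.
Qed.

Lemma count_mirred_deg X d : (0 < d)%N ->
  (d * count (fun P => pdeg P == d) (mirred_le X) <= #|F| ^ d)%N.
Proof.
move=> d_gt0; set L := [seq P <- mirred_le X | pdeg P == d].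
have LP P : P \in L -> mirred P /\ pdeg P = d.
  by rewrite mem_filter mem_mirred_le => /andP[/eqP-> /andP[]].
pose f : {poly F} := 'X^(#|F| ^ d) - 'X.
have qd : (1 < #|F| ^ d)%N.
  by rewrite -(exp1n d) ltn_exp2r -?lt0n // card_finNzRing_gt1.
have sf : size f = (#|F| ^ d).+1.
  by rewrite size_addl ?size_polyXn // size_opp size_polyX ltnS.
have LmL : all (@mirred F) L by apply/allP => P /LP[].
have Lf : \prod_(P <- L) P %| f.
  apply: prod_mirred_dvd (filter_uniq _ (uniq_mirred_le X)) LmL _ => P /LP[mP Pd].
  by rewrite /f -Pd mirred_dvd_Xq_subX.
have Lm : \prod_(P <- L) P \is monic.
  by rewrite big_seq; apply: monic_prod => P /LP[/mirredP[]].
have f0 : f != 0 by rewrite -size_poly_gt0 sf.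
have := dvdp_leq f0 Lf; rewrite sf -[X in (X <= _)%N]prednK ?size_poly_gt0 ?monic_neq0 // ltnS.
rewrite -/(pdeg _) big_seq pdeg_monic_prod => [|P /LP[/mirredP[]]//].
rewrite (eq_bigr (fun=> d)) => [|P /LP[]//].
by rewrite -big_seq big_const_seq iter_addn_0 count_predT size_filter.
Qed.

End Irreducibles.

Section Norm.
Variables (F : finFieldType) (R : realFieldType).
Implicit Types A B : {poly F}.

Lemma card_gt1R : 1 < #|F|%:R :> R.
Proof. by rewrite ltr1n card_finNzRing_gt1. Qed.

Lemma inv_cardX_range n : 0 <= (#|F|%:R ^+ n : R)^-1 <= 1.
Proof.
have q_gt0 : 0 < #|F|%:R :> R := lt_trans ltr01 card_gt1R.
by rewrite invr_ge0 ltW ?exprn_gt0 //= invf_le1 ?exprn_gt0 // exprn_ege1 // ltW // card_gt1R.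
Qed.

Lemma pnorm_gt0 A : 0 < pnorm R A.
Proof. by rewrite exprn_gt0 // (lt_trans ltr01 card_gt1R). Qed.

Lemma pnormM A B : A \is monic -> B \is monic -> pnorm R (A * B) = pnorm R A * pnorm R B.
Proof. by move=> Am Bm; rewrite /pnorm pdeg_monicM // exprD. Qed.

Lemma pnorm_ge2 A : (0 < pdeg A)%N -> 2 <= pnorm R A.
Proof.
move=> A0; apply: le_trans (_ : #|F|%:R <= _); first by rewrite ler_nat card_finNzRing_gt1.
by rewrite /pnorm -{1}(expr1 (#|F|%:R : R)) ler_eXn2l // card_gt1R.
Qed.

Lemma inv_pnorm_le_half A : (0 < pdeg A)%N -> 0 <= (pnorm R A)^-1 <= 2^-1.
Proof.
move=> A0; rewrite invr_ge0 ltW ?pnorm_gt0 //=.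
by rewrite lef_pV2 ?posrE ?pnorm_gt0 // pnorm_ge2.
Qed.

End Norm.

Section SmoothSums.
Variables (F : finFieldType) (R : realFieldType) (X D : nat).
Implicit Types A : {poly F}.
Local Notation Ps := (mirred_le F X).
Local Notation I := 'I_(size Ps).

Definition smooth_norm_sum : R :=
  \sum_(A <- monic_le F D | smooth X A) (pnorm R A)^-1.
Definition smooth_deg_sum : R :=
  \sum_(A <- monic_le F D | smooth X A) (pdeg A)%:R / pnorm R A.
Definition euler_factor : R := \prod_(P <- Ps) (1 - (pnorm R P)^-1)^-1.

Lemma mirred_le_nth (i : I) : mirred Ps`_i && (pdeg Ps`_i <= X)%N.
Proof. by rewrite -mem_mirred_le mem_nth. Qed.

Lemma pdeg_mirred_prod (e : I -> nat) :
  pdeg (\prod_(i : I) Ps`_i ^+ e i) = (\sum_(i : I) e i * pdeg Ps`_i)%N.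
Proof.
have Pm (i : I) : Ps`_i \is monic by case/andP: (mirred_le_nth i) => /mirredP[].
rewrite pdeg_monic_prod => [|i _]; last exact: monic_exp.
by apply: eq_bigr => i _; rewrite pdeg_monic_exp.
Qed.

Lemma pnorm_mirred_prod (e : I -> nat) :
  pnorm R (\prod_(i : I) Ps`_i ^+ e i) = \prod_(i : I) pnorm R Ps`_i ^+ e i.
Proof.
rewrite /pnorm pdeg_mirred_prod -prodrXr; apply: eq_bigr => i _.
by rewrite -exprM mulnC.
Qed.

(* Junk value [ffun=> ord0] unless A is X-smooth, monic and of degree at most D. *)
Definition exponents A : {ffun I -> 'I_D.+1} :=
  odflt [ffun=> ord0] [pick e : {ffun I -> 'I_D.+1} | A == \prod_(i : I) Ps`_i ^+ e i].

Lemma exponentsK A : A \in monic_le F D -> smooth X A ->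
  \prod_(i : I) Ps`_i ^+ exponents A i = A.
Proof.
rewrite mem_monic_le => /andP[Am sA] smA; have [e Ae] := smooth_factor Am smA.
have eD i : (e i < D.+1)%N.
  have : (pdeg A <= D)%N by rewrite /pdeg; case: (size A) sA.
  rewrite Ae pdeg_mirred_prod (bigD1 i) //= ltnS => /(leq_trans _); apply.
  case/andP: (mirred_le_nth i) => /mirred_gt0 Pi_gt0 _.
  by rewrite (leq_trans _ (leq_addr _ _)) // leq_pmulr.
rewrite /exponents; case: pickP => [e' /eqP-> // | no_e].
have := no_e [ffun i => Ordinal (eD i)]; rewrite {1}Ae.
suff -> : \prod_(i : I) Ps`_i ^+ [ffun i => Ordinal (eD i)] i = \prod_(i : I) Ps`_i ^+ e i.
  by rewrite eqxx.
by apply: eq_bigr => i _; rewrite ffunE.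
Qed.

Lemma exponents_inj : {in [seq A <- monic_le F D | smooth X A] &, injective exponents}.
Proof.
move=> A B; rewrite !mem_filter => /andP[smA mA] /andP[smB mB] eAB.
by rewrite -(exponentsK mA smA) -(exponentsK mB smB) eAB.
Qed.

Let x (i : I) : R := (pnorm R Ps`_i)^-1.

Let x_le_half i : 0 <= x i <= 2^-1.
Proof. by apply: inv_pnorm_le_half; case/andP: (mirred_le_nth i) => /mirred_gt0. Qed.

Let x_range i : 0 <= x i < 1.
Proof.
case/andP: (x_le_half i) => -> /le_lt_trans; apply.
by rewrite invf_lt1 ?ltr1n.
Qed.

Lemma smooth_norm_sum_le : smooth_norm_sum <= euler_factor.
Proof.
apply: le_trans (ler_sum_inj (phi := exponents) (G := fun e => \prod_i x i ^+ e i)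
  (undup_uniq _) exponents_inj _ _) _.
- by move=> e; apply: prodr_ge0 => i _; rewrite exprn_ge0 //; case/andP: (x_range i).
- move=> A mA smA; rewrite -{1}(exponentsK mA smA) pnorm_mirred_prod -prodfV.
  by under eq_bigr => i _ do rewrite -exprVn.
apply: le_trans (euler_sum_le x_range D.+1) _.
by rewrite /euler_factor (big_nth 0) big_mkord.
Qed.

Lemma smooth_deg_sum_le :
  smooth_deg_sum <= 2 * euler_factor * \sum_(P <- Ps) (pdeg P)%:R / pnorm R P.
Proof.
pose c (i : I) : R := (pdeg Ps`_i)%:R.
have c_ge0 i : 0 <= c i by rewrite ler0n.
apply: le_trans (ler_sum_inj (phi := exponents)
  (G := fun e => (\sum_i c i * (e i)%:R) * \prod_i x i ^+ e i)
  (undup_uniq _) exponents_inj _ _) _.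
- move=> e; rewrite mulr_ge0 ?sumr_ge0 // => [i _|].
    by rewrite mulr_ge0 ?ler0n.
  by apply: prodr_ge0 => i _; rewrite exprn_ge0 //; case/andP: (x_range i).
- move=> A mA smA; rewrite -{1 2}(exponentsK mA smA) pdeg_mirred_prod.
  rewrite pnorm_mirred_prod -prodfV natr_sum.
  under eq_bigr => i _ do rewrite natrM mulrC.
  suff -> : \prod_i x i ^+ exponents A i = \prod_(i : I) pnorm R Ps`_i ^- exponents A i by [].
  by apply: eq_bigr => i _; rewrite exprVn.
apply: le_trans (euler_weighted_sum_le x_range D.+1 c_ge0) _.
have -> : euler_factor = \prod_i (1 - x i)^-1.
  by rewrite /euler_factor (big_nth 0) big_mkord.
have -> : \sum_(P <- Ps) (pdeg P)%:R / pnorm R P = \sum_i c i * x i.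
  by rewrite (big_nth 0) big_mkord.
rewrite -mulrA mulrCA; apply: ler_wpM2l.
  by apply: prodr_ge0 => i _; rewrite invr_ge0 subr_ge0 ltW //; case/andP: (x_range i).
rewrite mulr_sumr ler_sum // => i _; rewrite [leRHS]mulrCA ler_wpM2l //.
have [x0 xh] := andP (x_le_half i).
rewrite ler_pdivrMr; [nra | lra].
Qed.

End SmoothSums.

Section PrimeCounting.
Variables (F : finFieldType) (R : realFieldType).
Local Notation q := (#|F|%:R : R).

Let q_gt0 : 0 < q. Proof. exact: lt_trans ltr01 (card_gt1R F R). Qed.

Lemma count_mirred_deg_le1 X d : (0 < d)%N ->
  (count (fun P => pdeg P == d) (mirred_le F X))%:R * d%:R / q ^+ d <= 1.
Proof.
move=> d_gt0; rewrite ler_pdivrMr ?exprn_gt0 // mul1r -natrM -natrX ler_nat mulnC.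
exact: count_mirred_deg.
Qed.

Lemma sum_mirred_deg_norm_le X :
  \sum_(P <- mirred_le F X) (pdeg P)%:R / pnorm R P <= X%:R.
Proof.
rewrite /pnorm (sumr_count (fun d => d%:R / q ^+ d) (mirred_le_deg F X)).
rewrite big_ord_recl /= mul0r mul0rn add0r.
apply: le_trans (_ : \sum_(d < X) (1 : R) <= _); last by rewrite sumr_const card_ord.
apply: ler_sum => d _.
by rewrite -[leLHS]mulr_natl mulrA count_mirred_deg_le1.
Qed.

Lemma euler_factor_le X : (0 < X)%N -> euler_factor F R X <= 2 ^+ #|F| * X%:R.
Proof.
case: X => // X _; set cnt := fun d => count (fun P => pdeg P == d) (mirred_le F X.+1).
pose g d := (1 - (q ^+ d)^-1)^-1.
have g_ge0 d : 0 <= g d by rewrite invr_ge0 subr_ge0; case/andP: (@inv_cardX_range F R d).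
pose t d := g d ^+ cnt d.
have t_ge0 d : 0 <= t d by rewrite exprn_ge0.
have -> : euler_factor F R X.+1 = \prod_(0 <= d < X.+2) t d.
  rewrite /euler_factor /pnorm big_mkord.
  exact: (prodr_count g (mirred_le_deg F _)).
rewrite big_ltn // big_ltn //.
have -> : t 0%N = 1.
  rewrite /t; suff -> : cnt 0%N = 0%N by rewrite expr0.
  apply/eqP; rewrite -leqn0 leqNgt -has_count; apply/hasPn => P.
  by rewrite mem_mirred_le => /andP[/mirred_gt0]; rewrite lt0n.
rewrite mul1r; apply: ler_pM => //.
- by apply: prodr_ge0.
- have cnt1 : (cnt 1 <= #|F|)%N.
    by have := count_mirred_deg F X.+1 (isT : 0 < 1)%N; rewrite mul1n expn1.
  have base : g 1%N <= 2.
    have q2 : 2 <= q by rewrite ler_nat card_finNzRing_gt1.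
    have qinv : q^-1 <= 2^-1 by rewrite lef_pV2 ?posrE //; lra.
    rewrite /g expr1 -[2 in leRHS]invrK lef_pV2 ?posrE; lra.
  apply: le_trans (_ : 2 ^+ cnt 1 <= _); last by rewrite ler_eXn2l ?ltr1n.
  by rewrite lerXn2r // nnegrE.
- apply: prod_telescope_le => // d d2; rewrite /t /g exprVn.
  have d_gt0 : (0 < d)%N by apply: ltn_trans d2.
  apply: invXn_le_ratio; rewrite ?inv_cardX_range //.
  by rewrite mulrAC count_mirred_deg_le1.
Qed.

End PrimeCounting.

Lemma smooth_sums_bound (F : finFieldType) (R : realFieldType) X D : (0 < X)%N ->
  smooth_norm_sum F R X D <= 2 ^+ #|F| * X%:R /\
  smooth_deg_sum F R X D <= 2 * (2 ^+ #|F| * X%:R) * X%:R.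
Proof.
move=> X_gt0; have E_le := euler_factor_le F R X_gt0.
split; first exact: le_trans (smooth_norm_sum_le F R X D) E_le.
apply: le_trans (smooth_deg_sum_le F R X D) _.
apply: ler_pM (sum_mirred_deg_norm_le F R X); rewrite ?ler_wpM2l //.
- rewrite mulr_ge0 // prodr_ge0 // => P _; rewrite invr_ge0 subr_ge0.
  by case/andP: (@inv_cardX_range F R (pdeg P)).
- by rewrite sumr_ge0 // => P _; rewrite divr_ge0 ?ler0n ?ltW ?pnorm_gt0.
Qed.

Section LemmaSum.
Variables (F : finFieldType) (R : realFieldType) (X : nat).
Implicit Types A H S T : {poly F}.

Lemma norm_alpha_le1 A : `|alpha R X A| <= 1.
Proof.
rewrite /alpha normr_prod; apply: prodr_ile1 => P _; rewrite normr_ge0 /=.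
have half_le1 : `|2^-1 : R| <= 1.
  by rewrite ger0_norm ?invr_ge0 ?ler0n // invf_le1 ?ltr0n // ler1n.
case: (pmult P A) => [|[|[|[|m]]]] /=; rewrite ?normr1 ?normr0 //;
  by case: ifP; rewrite ?normrN ?normr1 ?normr0.
Qed.

Let w0 A : R := if smooth X A then (pnorm R A)^-1 else 0.
Let w1 A : R := if smooth X A then (pdeg A)%:R / pnorm R A else 0.

Let w0_ge0 A : 0 <= w0 A.
Proof. by rewrite /w0; case: ifP => // _; rewrite invr_ge0 ltW ?pnorm_gt0. Qed.

Let w1_ge0 A : 0 <= w1 A.
Proof. by rewrite /w1; case: ifP => // _; rewrite divr_ge0 ?ler0n ?ltW ?pnorm_gt0. Qed.

Lemma lemma_sum_term_le H S T : H \is monic -> S \is monic -> T \is monic ->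
  smooth X (H * S * T) ->
  `|alpha R X (H * S) * alpha R X (H * T) / pnorm R (H * S * T) * (pdeg (S * T))%:R|
  <= w0 H * (w1 S * w0 T + w0 S * w1 T).
Proof.
move=> Hm Sm Tm smHST; have HSTm : H * S * T \is monic by rewrite !monicMl.
have smooth_of B : B \is monic -> B %| H * S * T -> smooth X B.
  by move=> Bm BHST; apply: smooth_dvd smHST; rewrite ?monic_neq0.
have smH : smooth X H by apply: smooth_of; rewrite // -mulrA dvdp_mulr.
have smS : smooth X S by apply: smooth_of; rewrite // mulrAC dvdp_mulIr.
have smT : smooth X T by apply: smooth_of; rewrite // dvdp_mulIr.
have [[pH pS] pT] := (pnorm_gt0 R H, pnorm_gt0 R S, pnorm_gt0 R T).
rewrite /w0 /w1 smH smS smT.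
have -> : (pnorm R H)^-1 * ((pdeg S)%:R / pnorm R S * (pnorm R T)^-1 +
           (pnorm R S)^-1 * ((pdeg T)%:R / pnorm R T)) =
          (pdeg (S * T))%:R / pnorm R (H * S * T).
  rewrite !pnormM ?monicMl // pdeg_monicM // natrD.
  by field; rewrite !gt_eqF.
rewrite !normrM normfV (gtr0_norm (pnorm_gt0 R _)) (ger0_norm (ler0n _ _)).
rewrite -mulrA [leRHS]mulrC; apply: ler_piMl.
  by rewrite mulr_ge0 ?ler0n // invr_ge0 ltW ?pnorm_gt0.
by apply: mulr_ile1; rewrite ?normr_ge0 ?norm_alpha_le1.
Qed.

Lemma norm_lemma_sum_le (Rp : {poly F}) :
  `|lemma_sum R X Rp| <=
  2 * smooth_norm_sum F R X (pdeg Rp) ^+ 2 * smooth_deg_sum F R X (pdeg Rp).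
Proof.
set ML := monic_le F (pdeg Rp).
have -> : smooth_norm_sum F R X (pdeg Rp) = \sum_(A <- ML) w0 A.
  by rewrite /smooth_norm_sum big_mkcond.
have -> : smooth_deg_sum F R X (pdeg Rp) = \sum_(A <- ML) w1 A.
  by rewrite /smooth_deg_sum big_mkcond.
have inner : \sum_(S <- ML) \sum_(T <- ML) (w1 S * w0 T + w0 S * w1 T) =
             2 * ((\sum_(A <- ML) w0 A) * \sum_(A <- ML) w1 A).
  under eq_bigr => S _ do rewrite big_split /= -!big_distrr /=.
  by rewrite big_split /= -!big_distrl /=; ring.
rewrite [leRHS](_ : _ = \sum_(H <- ML) w0 H * \sum_(S <- ML) \sum_(T <- ML)
    (w1 S * w0 T + w0 S * w1 T)); last by rewrite inner -big_distrl /=; ring.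
apply: le_trans (ler_norm_sum _ _ _) _; rewrite big_seq [leRHS]big_seq.
apply: ler_sum => H; rewrite mem_monic_le => /andP[Hm _]; rewrite big_distrr /=.
apply: le_trans (ler_norm_sum _ _ _) _; rewrite big_seq [leRHS]big_seq.
apply: ler_sum => S; rewrite mem_monic_le => /andP[Sm _]; rewrite big_distrr /=.
apply: le_trans (ler_norm_sum _ _ _) _.
rewrite [leRHS](bigID [pred T | [&& smooth X (H * S * T), coprimep S T,
  coprimep (H * S * T) Rp, (10 * pdeg (H * S) <= pdeg Rp)%N &
  (10 * pdeg (H * T) <= pdeg Rp)%N]]) /=.
apply: ler_wpDr; first by rewrite sumr_ge0 // => T _; rewrite mulr_ge0 ?addr_ge0 ?mulr_ge0.
rewrite big_seq_cond [leRHS]big_seq_cond; apply: ler_sum => T.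
by rewrite mem_monic_le => /andP[/andP[Tm _] /and5P[smHST _ _ _ _]]; apply: lemma_sum_term_le.
Qed.

End LemmaSum.

Theorem lemma6p2 (F : finFieldType) (R : realFieldType) :
  exists C : R, exists X0 : nat, forall X : nat, (X0 <= X)%N ->
    forall Rp : {poly F}, Rp \is monic ->
      `| lemma_sum R X Rp | <= C * (X%:R) ^+ 4.
Proof.
exists (4 * (2 ^+ #|F|) ^+ 3), 1%N => X X_gt0 Rp _.
apply: le_trans (norm_lemma_sum_le R X Rp) _.
have [S0_le S1_le] := smooth_sums_bound F R (pdeg Rp) X_gt0.
set S0 := smooth_norm_sum _ _ _ _ in S0_le *; set S1 := smooth_deg_sum _ _ _ _ in S1_le *.
set B := 2 ^+ #|F| * X%:R in S0_le S1_le *.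
have S0_ge0 : 0 <= S0 by rewrite sumr_ge0 // => A _; rewrite invr_ge0 ltW ?pnorm_gt0.
have S1_ge0 : 0 <= S1 by rewrite sumr_ge0 // => A _; rewrite divr_ge0 ?ler0n ?ltW ?pnorm_gt0.
rewrite [leRHS](_ : _ = 2 * (B ^+ 2 * (2 * B * X%:R))); last by rewrite /B; ring.
rewrite -mulrA ler_wpM2l // ler_pM ?exprn_ge0 //.
by rewrite lerXn2r // nnegrE (le_trans S0_ge0).
Qed.
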